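(* There is a function $C_1(t,\epsilon)$ such that the following holds for every positive integer $t$ and every $\epsilon\in(0,1)$: if $G$ is a bipartite graph with parts $A,B$ which is $\overline{K_{t,t}}$-free and satisfies $|B|\geq \epsilon^{-1}t$, then $A$ contains at most $C_1(t,\epsilon)$ vertices of degree at most $(1-\epsilon)|B|$.
   Context: A bipartite graph with parts $A,B$ is called $\overline{K_{t,t}}$-free if for every $t$-set $A_0\subseteq A$ and every $t$-set $B_0\subseteq B$ there is at least one edge between $A_0$ and $B_0$ (equivalently, the bipartite complement contains no $K_{t,t}$). *)

From mathcomp Require Import all_boot.
From Stdlib Require Import Reals.
Set Implicit Arguments. Unset Strict Implicit. Unset Printing Implicit Defensive.

Definition coKtt_free (A B : finType) (E : A -> B -> bool) (t : nat) : Prop :=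
  forall (A0 : {set A}) (B0 : {set B}), #|A0| = t -> #|B0| = t ->
    exists a b, [/\ a \in A0, b \in B0 & E a b].

Definition degA (A B : finType) (E : A -> B -> bool) (a : A) : nat :=
  #|[set b | E a b]|.

From mathcomp Require Import all_boot zify.
From Stdlib Require Import Reals Lra ZArith.
Set Implicit Arguments. Unset Strict Implicit. Unset Printing Implicit Defensive.

(* A vertex of A of degree at most (1 - eps)|B| misses at least eps|B| >= t
   vertices of B, and the hypothesis says that the graph of non-edges has no
   K_{t,t}; so the count is a Kovari-Sos-Turan argument on non-edges.  Let S be
   a set of vertices of A each missing at least D vertices, anticomplete to a
   set T of t - j vertices of B.  Double counting the non-edges from S to B \ T
   gives some b outside T missed by at least |S| (D - t + 1) / |B| vertices of
   S; keeping those and adding b to T, after j steps T has t elements and at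
   most t - 1 vertices remain.  Hence |S| (D - t + 1)^t <= (t - 1) |B|^t, and
   since |B| <= c (D - t + 1) for any integer c >= t / eps when D >= eps |B|,
   this gives |S| <= (t - 1) c^t. *)

Lemma card_set_in_sum (T : finType) (X : {set T}) (P : pred T) :
  #|[set x in X | P x]| = \sum_(x in X) P x.
Proof. by rewrite -sum1dep_card big_mkcondr. Qed.

Lemma double_counting (I J : finType) (X : {set I}) (Y : {set J}) (R : I -> J -> bool) :
  \sum_(j in Y) #|[set i in X | R i j]| = \sum_(i in X) #|[set j in Y | R i j]|.
Proof.
under eq_bigr do rewrite card_set_in_sum.
by rewrite exchange_big; under eq_bigr do rewrite -card_set_in_sum.
Qed.

Lemma exists_ge_average (I : finType) (X : {set I}) (F : I -> nat) :
  0 < \sum_(i in X) F i -> exists2 i, i \in X & \sum_(j in X) F j <= #|X| * F i.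
Proof.
move=> sum_gt0; have X_gt0 : 0 < #|X|.
  by rewrite card_gt0; apply: contraTneq sum_gt0 => ->; rewrite big_set0.
have [i Xi maxFi] := eq_bigmax_cond F X_gt0.
exists i => //; rewrite -maxFi -sum_nat_const; apply: leq_sum => j Xj.
exact: leq_bigmax_cond.
Qed.

Lemma exists_subset_card (T : finType) (X : {set T}) k :
  k <= #|X| -> exists2 Y : {set T}, Y \subset X & #|Y| = k.
Proof.
rewrite -bin_gt0 -cards_draws => /card_gt0P [Y].
by rewrite inE => /andP [subYX /eqP cardY]; exists Y.
Qed.

Section NonNeighbourhoods.

Variables (A B : finType) (E : A -> B -> bool).

Definition nondegA (a : A) : nat := #|~: [set b | E a b]|.

Lemma degA_add_nondegA a : degA E a + nondegA a = #|B|.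
Proof. exact: cardsC. Qed.

Definition anticomplete (S : {set A}) (T : {set B}) : Prop :=
  forall a b, a \in S -> b \in T -> ~~ E a b.

Lemma nondegA_leq_split a (T : {set B}) :
  nondegA a <= #|T| + #|[set b in ~: T | ~~ E a b]|.
Proof.
apply: leq_trans (leq_card_setU _ _); apply/subset_leq_card/subsetP => b.
by rewrite !inE => nEab; rewrite nEab andbT orbN.
Qed.

Lemma exists_common_nonneighbour (S : {set A}) (T : {set B}) D :
  (forall a, a \in S -> D <= nondegA a) -> 0 < #|S| * (D - #|T|) ->
  exists2 b, b \notin T & #|S| * (D - #|T|) <= #|B| * #|[set a in S | ~~ E a b]|.
Proof.
move=> D_le pos.
have sum_ge : #|S| * (D - #|T|) <= \sum_(b in ~: T) #|[set a in S | ~~ E a b]|.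
  rewrite double_counting -sum_nat_const; apply: leq_sum => a Sa.
  by rewrite leq_subLR (leq_trans (D_le a Sa)) ?nondegA_leq_split.
have [b Tb sum_le] := exists_ge_average (leq_trans pos sum_ge).
exists b; first by rewrite -in_setC.
apply: leq_trans sum_ge (leq_trans sum_le _).
by rewrite leq_mul2r max_card orbT.
Qed.

Section CoKttFree.

Variable t : nat.
Hypothesis Efree : coKtt_free E t.

Lemma card_anticomplete_leq_pred (S : {set A}) (T : {set B}) :
  #|T| = t -> anticomplete S T -> #|S| <= t.-1.
Proof.
move=> cardT antiST; rewrite leqNgt; apply/negP => ltS.
have [S0 subS0 cardS0] := @exists_subset_card _ S t ltac:(lia).
have [a [b [S0a Tb Eab]]] := Efree cardS0 cardT.
by move: (antiST a b (subsetP subS0 a S0a) Tb); rewrite Eab.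
Qed.

Lemma card_anticomplete_mul_exp D j (S : {set A}) (T : {set B}) :
  #|T| + j = t -> anticomplete S T -> (forall a, a \in S -> D <= nondegA a) ->
  #|S| * expn (D - t.-1) j <= t.-1 * expn #|B| j.
Proof.
elim: j S T => [|j IH] S T cardT antiST D_le.
  by rewrite !expn0 !muln1 (card_anticomplete_leq_pred _ antiST) // -cardT addn0.
have [S_m0 | pos] := posnP (#|S| * (D - t.-1)).
  by rewrite expnS mulnA S_m0.
have le_m : #|S| * (D - t.-1) <= #|S| * (D - #|T|).
  by rewrite leq_mul2l leq_sub2l ?orbT //; lia.
have [b Tb nbS] := exists_common_nonneighbour D_le (leq_trans pos le_m).
set S' := [set a in S | ~~ E a b] in nbS.
have IHb : #|S'| * expn (D - t.-1) j <= t.-1 * expn #|B| j.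
  apply: IH (b |: T) _ _ _; first by rewrite cardsU1 Tb; lia.
    move=> a b'; rewrite !inE => /andP [Sa nEab] /predU1P [-> // | Tb'].
    exact: antiST.
  by move=> a; rewrite inE => /andP [Sa _]; apply: D_le.
rewrite expnS mulnA (expnS #|B|) mulnCA.
apply: leq_trans (_ : #|B| * #|S'| * expn (D - t.-1) j <= _).
  by rewrite leq_mul2r (leq_trans le_m nbS) orbT.
by rewrite -mulnA leq_mul2l IHb orbT.
Qed.

Lemma card_nondegA_geq_mul_exp D (S : {set A}) :
  (forall a, a \in S -> D <= nondegA a) ->
  #|S| * expn (D - t.-1) t <= t.-1 * expn #|B| t.
Proof.
apply: (card_anticomplete_mul_exp (T := set0)); first by rewrite cards0.
by move=> a b _; rewrite inE.
Qed.

Lemma card_nondegA_bound c (S : {set A}) :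
  (forall a, a \in S -> t.-1 < nondegA a /\ #|B| <= c * (nondegA a - t.-1)) ->
  #|S| <= t.-1 * expn c t.
Proof.
move=> bounds; have [-> | [a0 Sa0]] := set_0Vmem S; first by rewrite cards0.
have [a Sa min_a] := arg_minnP nondegA Sa0.
have [m_gt0 B_le] := bounds a Sa.
set m := nondegA a - t.-1 in B_le.
have m_exp_gt0 : 0 < expn m t by rewrite expn_gt0 subn_gt0 m_gt0.
rewrite -(leq_pmul2r m_exp_gt0) -mulnA -expnMn.
apply: leq_trans (card_nondegA_geq_mul_exp min_a) _.
have [-> // | t_gt0] := posnP t.
by rewrite leq_mul2l leq_exp2r // B_le orbT.
Qed.

End CoKttFree.

End NonNeighbourhoods.

Lemma leq_mul_sub_pred (t n : nat) : 0 < t -> t <= n -> n <= t * (n - t.-1).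
Proof. by case: t => // s _ /= lt_sn; nia. Qed.

Lemma le_INR_up (x : R) : (0 <= x)%R -> (x <= INR (Z.to_nat (up x)))%R.
Proof.
move=> x_ge0; have [x_lt_up _] := archimed x.
rewrite INR_IZR_INZ Z2Nat.id; first lra.
by apply: le_IZR; lra.
Qed.

Lemma leq_mul_sub_pred_of_R (t n b c : nat) (eps : R) :
  0 < t -> (0 < eps)%R -> (INR t / eps <= INR c)%R -> t <= n ->
  (eps * INR b <= INR n)%R -> b <= c * (n - t.-1).
Proof.
move=> t_gt0 eps_gt0 t_le_c t_le_n b_le_n; apply/leP/INR_le.
have t_le_ceps : (INR t <= INR c * eps)%R.
  have -> : INR t = (INR t / eps * eps)%R by field; lra.
  exact: Rmult_le_compat_r (Rlt_le _ _ eps_gt0) t_le_c.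
have := le_INR _ _ (leP (leq_mul_sub_pred t_gt0 t_le_n)).
have := pos_INR (n - t.-1).
rewrite !mult_INR => m_ge0 n_le_tm.
apply: (Rmult_le_reg_l eps) => //; nra.
Qed.

Theorem mainTheorem3 :
  exists C1 : nat -> R -> nat,
    forall (t : nat) (eps : R), (0 < t)%nat -> (0 < eps < 1)%R ->
    forall (A B : finType) (E : A -> B -> bool),
      coKtt_free E t ->
      (INR #|B| >= INR t / eps)%R ->
      (#|[set a : A | if Rle_dec (INR (degA E a)) ((1 - eps) * INR #|B|) then true else false]| <= C1 t eps)%nat.
Proof.
exists (fun t eps => t.-1 * expn (Z.to_nat (up (INR t / eps))) t).
move=> t eps t_gt0 [eps_gt0 _] A B E Efree B_large.
apply: (card_nondegA_bound Efree) => a; rewrite inE.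
case: Rle_dec => // low_deg _.
have nondeg_large : (eps * INR #|B| <= INR (nondegA E a))%R.
  have := f_equal INR (degA_add_nondegA E a); rewrite plus_INR; lra.
have t_le_epsB : (INR t <= eps * INR #|B|)%R.
  have -> : INR t = (eps * (INR t / eps))%R by field; lra.
  by apply: Rmult_le_compat_l; lra.
have t_le_nondeg : t <= nondegA E a by apply/leP/INR_le; lra.
have t_pos : (0 < INR t)%R by apply: lt_0_INR; apply/ltP.
split; first by rewrite prednK.
apply: (leq_mul_sub_pred_of_R t_gt0 eps_gt0 _ t_le_nondeg nondeg_large).
by apply/le_INR_up/Rlt_le/Rdiv_lt_0_compat.
Qed.
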